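(* For $k\in\mathbb{N}$ let $A(k)=\dfrac{3^{2k+3}-32k^3-96k^2-88k-27}{4\,(2k+3)!}$. (i) For every $x\in(0,\pi/2)$ and every $n\in\mathbb{N}$, $$\sum_{k=2}^{2n}(-1)^{k+1}A(k)\,x^{2k}<\cos x-\Big(\frac{\sin x}{x}\Big)^{3}<\sum_{k=2}^{2n+1}(-1)^{k+1}A(k)\,x^{2k}.$$ (ii) For every $x\in(0,\pi/2)$ and every $m\in\mathbb{N}$, $$\Big|\cos x-\Big(\frac{\sin x}{x}\Big)^{3}-\sum_{k=1}^{m}(-1)^{k+1}A(k)\,x^{2k}\Big|<A(m+1)\,x^{2m+2}.$$
   Context: $\mathbb{N}=\{1,2,3,\dots\}$. *)

From Stdlib Require Import Reals Lra Lia Arith Factorial.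
Open Scope R_scope.

Definition A (k : nat) : R :=
  (3 ^ (2 * k + 3) - 32 * INR k ^ 3 - 96 * INR k ^ 2 - 88 * INR k - 27)
  / (4 * INR (fact (2 * k + 3))).

Definition term (k : nat) (x : R) : R := (-1) ^ (k + 1) * A k * x ^ (2 * k).

(* psum a b x = sum_{k=a}^{b} term k x  (empty, i.e. 0, if b < a) *)
Fixpoint psum (a b : nat) (x : R) : R :=
  match b with
  | O => if (a <=? 0)%nat then term 0 x else 0
  | S b' => psum a b' x + (if (a <=? S b')%nat then term (S b') x else 0)
  end.

Definition F (x : R) : R := cos x - (sin x / x) ^ 3.

From Stdlib Require Import Reals Lra Lia Factorial.
Open Scope R_scope.

(* Since sin^3 x = (3 sin x - sin 3x) / 4, the function (sin x / x)^3 is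
   3/(4x^2) (sin x / x - sin 3x / (3x)), a difference of two power series in x^2;
   subtracting it from the series of cos x gives exactly sum_k (-1)^(k+1) A(k) x^(2k),
   with A(0) = A(1) = 0.  For k >= 2 one has A(k) > 0 and A(k+1) < A(k) / 4, so for
   x^2 < pi^2/4 < 4 the terms decrease strictly in absolute value and both claims are
   the Leibniz estimates for alternating series, made strict by the strict decrease. *)

Lemma Un_cv_const (c : R) : Un_cv (fun _ => c) c.
Proof.
  intros eps Heps; exists 0%nat; intros n _.
  unfold Rdist; rewrite Rminus_diag, Rabs_R0; exact Heps.
Qed.

Lemma series_terms_cv0 (a : nat -> R) (l : R) :
  Un_cv (sum_f_R0 a) l -> Un_cv a 0.
Proof.
  intro Hl; apply CV_shift with 1%nat.
  apply Un_cv_ext with (fun n => sum_f_R0 a (n + 1) - sum_f_R0 a n).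
  { intro n; rewrite Nat.add_1_r, tech5; ring. }
  replace 0 with (l - l) by ring.
  apply CV_minus; [apply CV_shift' |]; exact Hl.
Qed.

Lemma tg_alt_cv0 (u : nat -> R) : Un_cv (tg_alt u) 0 -> Un_cv u 0.
Proof.
  intros Hu eps Heps; destruct (Hu eps Heps) as [N HN]; exists N; intros n Hn.
  specialize (HN n Hn); unfold Rdist, tg_alt in *; rewrite Rminus_0_r in *.
  rewrite Rabs_mult, pow_1_abs, Rmult_1_l in HN; exact HN.
Qed.

Lemma tg_alt_odd (u : nat -> R) (n : nat) : tg_alt u (S (2 * n)) = - u (S (2 * n)).
Proof. unfold tg_alt; rewrite pow_1_odd; ring. Qed.

Lemma sum_tg_alt_SS (u : nat -> R) (n : nat) :
  sum_f_R0 (tg_alt u) (S (S n))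
  = sum_f_R0 (tg_alt u) n + (-1) ^ n * (u (S (S n)) - u (S n)).
Proof. rewrite !tech5; unfold tg_alt; simpl; ring. Qed.

Section StrictAlternatingSeries.

Variables (u : nat -> R) (l : R).
Hypothesis u_decr : forall n, u (S n) < u n.
Hypothesis u_sum : Un_cv (sum_f_R0 (tg_alt u)) l.

Lemma alternated_series_ineq_strict (N : nat) :
  sum_f_R0 (tg_alt u) (S (2 * N)) < l < sum_f_R0 (tg_alt u) (2 * N).
Proof.
  assert (u_cv0 : Un_cv u 0) by apply tg_alt_cv0, (series_terms_cv0 _ l), u_sum.
  destruct (alternated_series_ineq u l (S N)) as [lo hi]; auto.
  { intro n; left; apply u_decr. }
  replace (2 * S N)%nat with (S (S (2 * N))) in lo, hi by lia.
  rewrite sum_tg_alt_SS, pow_1_odd in lo; rewrite sum_tg_alt_SS, pow_1_even in hi.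
  pose proof (u_decr (S (2 * N))); pose proof (u_decr (S (S (2 * N)))).
  lra.
Qed.

Lemma alternated_series_error (j : nat) :
  Rabs (l - sum_f_R0 (tg_alt u) j) < u (S j).
Proof.
  destruct (Nat.Even_or_Odd j) as [[N ->] | [N ->]].
  - destruct (alternated_series_ineq_strict N) as [lo hi].
    rewrite tech5, tg_alt_odd in lo.
    apply Rabs_def1; lra.
  - destruct (alternated_series_ineq_strict N) as [lo _].
    destruct (alternated_series_ineq_strict (S N)) as [_ hi].
    replace (2 * S N)%nat with (S (S (2 * N))) in hi by lia.
    rewrite sum_tg_alt_SS, pow_1_even in hi.
    replace (2 * N + 1)%nat with (S (2 * N)) in * by lia.
    rewrite tech5, tg_alt_odd in lo |- *.
    apply Rabs_def1; lra.
Qed.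

Lemma alternated_series_lt_first : Rabs l < u 0%nat.
Proof.
  destruct (alternated_series_ineq_strict 0) as [lo hi].
  unfold tg_alt in lo, hi; simpl in lo, hi.
  pose proof (u_decr 0).
  apply Rabs_def1; lra.
Qed.

End StrictAlternatingSeries.

Lemma sin_3a (x : R) : sin (3 * x) = 3 * sin x - 4 * sin x ^ 3.
Proof.
  replace (3 * x) with (2 * x + x) by ring.
  rewrite sin_plus, sin_2a, cos_2a_sin.
  pose proof (sin2_cos2 x) as Hsc; unfold Rsqr in Hsc.
  replace (2 * sin x * cos x * cos x) with (2 * sin x * (1 - sin x * sin x)) by
    (rewrite <- Hsc; ring).
  ring.
Qed.

Lemma sinc_cube (x : R) :
  x <> 0 -> (sin x / x) ^ 3 = 3 / (4 * (x * x)) * (sin x / x - sin (3 * x) / (3 * x)).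
Proof. intro Hx; rewrite sin_3a; field; exact Hx. Qed.

Lemma cos_series (x : R) : infinite_sum (fun i => cos_n i * (x * x) ^ i) (cos x).
Proof. unfold cos; destruct (exist_cos (Rsqr x)) as [a Ha]; exact Ha. Qed.

Lemma sinc_series (x : R) :
  x <> 0 -> infinite_sum (fun i => sin_n i * (x * x) ^ i) (sin x / x).
Proof.
  intro Hx; unfold sin; destruct (exist_sin (Rsqr x)) as [a Ha].
  replace (x * a / x) with a by (field; exact Hx); exact Ha.
Qed.

Lemma INR_fact_2k3 (k : nat) :
  INR (fact (2 * k + 3))
  = (2 * INR k + 3) * (2 * INR k + 2) * (2 * INR k + 1) * INR (fact (2 * k)).
Proof.
  replace (2 * k + 3)%nat with (S (S (S (2 * k)))) by lia.
  rewrite !fact_simpl, !mult_INR, !S_INR, mult_INR; simpl; ring.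
Qed.

Lemma term_series_coef (k : nat) (x : R) :
  x <> 0 ->
  term k x = cos_n k * (x * x) ^ k
    - 3 / (4 * (x * x))
      * (sin_n (S k) * (x * x) ^ S k - sin_n (S k) * (3 * x * (3 * x)) ^ S k).
Proof.
  intro Hx; unfold term, A, cos_n, sin_n.
  replace (2 * S k + 1)%nat with (2 * k + 3)%nat by lia.
  rewrite INR_fact_2k3.
  replace (3 ^ (2 * k + 3)) with (27 * 9 ^ k)
    by (rewrite pow_add, pow_mult; replace (3 ^ 2) with 9 by ring; ring).
  replace (x ^ (2 * k)) with ((x * x) ^ k) by (rewrite pow_mult; f_equal; ring).
  replace ((-1) ^ (k + 1)) with (- (-1) ^ k) by (rewrite pow_add; simpl; ring).
  replace (3 * x * (3 * x)) with (9 * (x * x)) by ring.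
  rewrite (Rpow_mult_distr 9 (x * x)).
  pose proof (INR_fact_neq_0 (2 * k)); pose proof (pos_INR k).
  simpl pow; field; repeat split; try lra; nra.
Qed.

Lemma F_series (x : R) : x <> 0 -> Un_cv (sum_f_R0 (fun k => term k x)) (F x).
Proof.
  intro Hx.
  set (c := fun i => sin_n i * (x * x) ^ i - sin_n i * (3 * x * (3 * x)) ^ i).
  assert (Hc : Un_cv (sum_f_R0 c) (sin x / x - sin (3 * x) / (3 * x))).
  { apply Un_cv_ext
      with (2 := CV_minus _ _ _ _ (sinc_series x Hx) (sinc_series (3 * x) ltac:(lra))).
    intro n; unfold c; symmetry; apply minus_sum. }
  assert (Hc_shift : Un_cv (sum_f_R0 (fun i => c (S i))) (sin x / x - sin (3 * x) / (3 * x))).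
  { apply Un_cv_ext with (2 := CV_shift' _ 1 _ Hc).
    intro n; rewrite Nat.add_1_r, decomp_sum by lia; unfold c at 1; simpl; ring. }
  unfold F; rewrite sinc_cube by exact Hx.
  apply Un_cv_ext with (2 := CV_minus _ _ _ _ (cos_series x)
    (CV_mult _ _ _ _ (Un_cv_const (3 / (4 * (x * x)))) Hc_shift)).
  intro n; rewrite scal_sum, <- minus_sum; apply sum_eq; intros i _.
  rewrite term_series_coef by exact Hx; unfold c; ring.
Qed.

Lemma A_0 : A 0 = 0.
Proof. unfold A; simpl; field; apply not_0_INR, fact_neq_0. Qed.

Lemma A_1 : A 1 = 0.
Proof. unfold A; simpl; field; apply not_0_INR, fact_neq_0. Qed.

Lemma psum_eq_sum (a b : nat) (x : R) :
  (a <= 2)%nat -> psum a b x = sum_f_R0 (fun k => term k x) b.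
Proof.
  assert (term0 : term 0 x = 0) by (unfold term; rewrite A_0; ring).
  assert (term1 : term 1 x = 0) by (unfold term; rewrite A_1; ring).
  intro Ha; induction b as [| b IH].
  - simpl; destruct (a <=? 0)%nat; [reflexivity | now rewrite term0].
  - simpl psum; rewrite IH, tech5.
    destruct (a <=? S b)%nat eqn:E; [reflexivity |].
    apply Nat.leb_gt in E; replace b with 0%nat by lia; rewrite term1; ring.
Qed.

Definition A_cubic (K : R) : R := 32 * K ^ 3 + 96 * K ^ 2 + 88 * K + 27.

Lemma A_eq (k : nat) :
  A k = (3 ^ (2 * k + 3) - A_cubic (INR k)) / (4 * INR (fact (2 * k + 3))).
Proof. unfold A, A_cubic; f_equal; ring. Qed.

Lemma A_cubic_lt (k : nat) : (2 <= k)%nat -> 2 * A_cubic (INR k) < 3 ^ (2 * k + 3).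
Proof.
  induction 1 as [| k Hk IH].
  - unfold A_cubic; simpl; lra.
  - replace (2 * S k + 3)%nat with (2 + (2 * k + 3))%nat by lia.
    rewrite pow_add, S_INR.
    assert (2 <= INR k) by (apply (le_INR 2); exact Hk).
    unfold A_cubic in *; simpl pow in *; nra.
Qed.

Lemma A_pos (k : nat) : (2 <= k)%nat -> 0 < A k.
Proof.
  intro Hk; pose proof (A_cubic_lt k Hk).
  assert (0 <= INR k) by apply pos_INR.
  unfold A; apply Rdiv_lt_0_compat.
  - unfold A_cubic in *; nra.
  - pose proof (lt_0_INR _ (lt_O_fact (2 * k + 3))); lra.
Qed.

(* With T = 3^(2k+3) > 2 A_cubic k, the ratio A(k+1) (2k+4)(2k+5) / A(k)
   = (9 T - A_cubic (k+1)) / (T - A_cubic k) is below 18, while (2k+4)(2k+5) >= 72. *)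
Lemma A_succ_lt (k : nat) : (2 <= k)%nat -> 4 * A (S k) < A k.
Proof.
  intro Hk.
  pose proof (A_cubic_lt k Hk) as HT.
  assert (HK : 2 <= INR k) by (apply (le_INR 2); exact Hk).
  set (T := 3 ^ (2 * k + 3)) in HT.
  set (f := INR (fact (2 * k + 3))).
  set (y := (2 * INR k + 5) * (2 * INR k + 4)).
  assert (Hf : 0 < f) by apply lt_0_INR, lt_O_fact.
  assert (Hy : 72 <= y) by (unfold y; nra).
  assert (E1 : A (S k) * (4 * y * f) = 9 * T - A_cubic (INR k + 1)).
  { rewrite A_eq, S_INR.
    replace (3 ^ (2 * S k + 3)) with (9 * T) by
      (unfold T; replace (2 * S k + 3)%nat with (2 + (2 * k + 3))%nat by lia;
       rewrite (pow_add 3 2); ring).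
    replace (INR (fact (2 * S k + 3))) with (y * f) by
      (unfold y, f; replace (2 * S k + 3)%nat with (S (S (2 * k + 3))) by lia;
       rewrite !fact_simpl, !mult_INR, !S_INR, plus_INR, mult_INR; simpl INR; ring).
    field; lra. }
  assert (E2 : A k * (4 * f) = T - A_cubic (INR k)).
  { rewrite A_eq; fold f T; field; lra. }
  assert (0 < A_cubic (INR k + 1)) by (unfold A_cubic; nra).
  assert (0 < A_cubic (INR k)) by (unfold A_cubic; nra).
  apply Rmult_lt_reg_r with (4 * y * f); [nra |].
  rewrite Rmult_assoc, E1.
  replace (A k * (4 * y * f)) with (y * (A k * (4 * f))) by ring.
  rewrite E2; nra.
Qed.

(* Because A 0 = A 1 = 0, the series of F starts at k = 2; reindexed from there it is
   minus the alternating series of the tail_term. *)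
Definition tail_term (x : R) (j : nat) : R := A (j + 2) * x ^ (2 * (j + 2)).

Lemma sum_term_tail (x : R) (N : nat) :
  sum_f_R0 (fun k => term k x) (N + 2) = - sum_f_R0 (tg_alt (tail_term x)) N.
Proof.
  induction N as [| N IH].
  - simpl; unfold term, tg_alt, tail_term; rewrite A_0, A_1; simpl; ring.
  - replace (S N + 2)%nat with (S (N + 2)) by lia.
    rewrite tech5, IH, tech5; unfold term, tg_alt, tail_term.
    replace (S (N + 2)) with (S N + 2)%nat by lia.
    rewrite (pow_add (-1) (S N + 2) 1), (pow_add (-1) (S N) 2); ring.
Qed.

Lemma tail_series (x : R) :
  x <> 0 -> Un_cv (sum_f_R0 (tg_alt (tail_term x))) (- F x).
Proof.
  intro Hx; apply Un_cv_ext with (2 := CV_opp _ _ (CV_shift' _ 2 _ (F_series x Hx))).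
  intro n; unfold opp_seq; rewrite sum_term_tail; ring.
Qed.

Lemma tail_term_decr (x : R) :
  0 < x < PI / 2 -> forall j, tail_term x (S j) < tail_term x j.
Proof.
  intros Hx j; unfold tail_term.
  replace (S j + 2)%nat with (S (j + 2)) by lia.
  replace (2 * S (j + 2))%nat with (S (S (2 * (j + 2)))) by lia.
  pose proof (A_succ_lt (j + 2) ltac:(lia)); pose proof (A_pos (S (j + 2)) ltac:(lia)).
  assert (0 < x ^ (2 * (j + 2))) by (apply pow_lt; lra).
  assert (x * x < 4) by (pose proof PI_4; nra).
  rewrite <- !tech_pow_Rmult; set (p := x ^ (2 * (j + 2))) in *.
  apply Rlt_trans with (4 * A (S (j + 2)) * p).
  - replace (A (S (j + 2)) * (x * (x * p))) with (A (S (j + 2)) * p * (x * x)) by ring.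
    replace (4 * A (S (j + 2)) * p) with (A (S (j + 2)) * p * 4) by ring.
    apply Rmult_lt_compat_l; [apply Rmult_lt_0_compat |]; lra.
  - apply Rmult_lt_compat_r; lra.
Qed.

Lemma F_between_psum (x : R) (n : nat) :
  0 < x < PI / 2 -> (1 <= n)%nat -> psum 2 (2 * n) x < F x < psum 2 (2 * n + 1) x.
Proof.
  intros Hx Hn.
  destruct (alternated_series_ineq_strict _ _ (tail_term_decr x Hx)
              (tail_series x ltac:(lra)) (n - 1)) as [lo hi].
  rewrite !psum_eq_sum by lia.
  replace (2 * n + 1)%nat with (S (2 * (n - 1)) + 2)%nat by lia.
  replace (2 * n)%nat with (2 * (n - 1) + 2)%nat by lia.
  rewrite !sum_term_tail; lra.
Qed.

Lemma F_psum_error (x : R) (m : nat) :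
  0 < x < PI / 2 -> (1 <= m)%nat ->
  Rabs (F x - psum 1 m x) < A (m + 1) * x ^ (2 * m + 2).
Proof.
  intros Hx Hm.
  pose proof (tail_term_decr x Hx) as decr.
  pose proof (tail_series x ltac:(lra)) as cv.
  rewrite psum_eq_sum by lia.
  destruct (Nat.eq_dec m 1) as [-> | Hm2].
  - pose proof (alternated_series_lt_first _ _ decr cv) as H.
    rewrite Rabs_Ropp in H.
    replace (sum_f_R0 (fun k => term k x) 1) with 0
      by (simpl; unfold term; rewrite A_0, A_1; ring).
    rewrite Rminus_0_r; exact H.
  - pose proof (alternated_series_error _ _ decr cv (m - 2)) as H.
    replace m with (m - 2 + 2)%nat by lia; rewrite sum_term_tail.
    replace (F x - - sum_f_R0 (tg_alt (tail_term x)) (m - 2))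
      with (- (- F x - sum_f_R0 (tg_alt (tail_term x)) (m - 2))) by ring.
    rewrite Rabs_Ropp; unfold tail_term in H.
    replace (m - 2 + 2 + 1)%nat with (S (m - 2) + 2)%nat by lia.
    replace (2 * (m - 2 + 2) + 2)%nat with (2 * (S (m - 2) + 2))%nat by lia.
    exact H.
Qed.

Theorem theorem1 :
  (forall (x : R) (n : nat), 0 < x < PI / 2 -> (1 <= n)%nat ->
     psum 2 (2 * n) x < F x < psum 2 (2 * n + 1) x) /\
  (forall (x : R) (m : nat), 0 < x < PI / 2 -> (1 <= m)%nat ->
     Rabs (F x - psum 1 m x) < A (m + 1) * x ^ (2 * m + 2)).
Proof.
  split; [exact F_between_psum | exact F_psum_error].
Qed.
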